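(* In the consistent-read iteration defined in the context with step size $\beta=1$, any deterministic $x_0$, any integer $\tau\ge0$ and any deterministic $k(j)$ with $j-\tau\le k(j)\le j$, let $\rho=\max_l\frac1n\sum_{r=1}^n|A_{lr}|$. Then for every $j\ge0$ \[E_{j+1}\le E_j-(1-\rho\tau)\,\mathbb{E}\big[(x_{k(j)}-x^\star,d_j)_A^2\big]+\rho\sum_{t=k(j)}^{j-1}\mathbb{E}\big[(x_{k(t)}-x^\star,d_t)_A^2\big],\] and consequently for every $m\ge1$ \[E_m\le E_0-(1-2\rho\tau)\sum_{i=0}^{m-1}\mathbb{E}\big[(x_{k(i)}-x^\star,d_i)_A^2\big].\]
   Context: Let $n\ge2$ and let $A\in\mathbb{R}^{n\times n}$ be symmetric positive definite with all diagonal entries equal to $1$; let $b\in\mathbb{R}^n$ and $x^\star=A^{-1}b$. Write $(x,y)_A=y^TAx$ and $\|x\|_A=\sqrt{(x,x)_A}$; $e^{(1)},\dots,e^{(n)}$ are the standard basis vectors. Consistent-read iteration: let $d_0,d_1,\dots$ be i.i.d. random vectors, each uniformly distributed on $\{e^{(1)},\dots,e^{(n)}\}$; let $\tau\ge0$ be an integer and $k(0),k(1),\dots$ deterministic integers with $j-\tau\le k(j)\le j$; given $x_0\in\mathbb{R}^n$ and a step size $\beta$, define for $j\ge0$ \[\gamma_j=(x^\star-x_{k(j)},d_j)_A,\qquad x_{j+1}=x_j+\beta\gamma_jd_j.\] Define $E_m=\mathbb{E}[\|x_m-x^\star\|_A^2]$. An empty sum is zero. *)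

From HB Require Import structures.
From mathcomp Require Import all_boot all_order all_algebra.
Set Implicit Arguments. Unset Strict Implicit. Unset Printing Implicit Defensive.
Import Order.TTheory GRing.Theory Num.Theory.
Local Open Scope ring_scope.

Section Defs.
Variable R : realFieldType.
Variable n : nat.

Definition ipA (A : 'M[R]_n) (x y : 'cV[R]_n) : R := (y^T *m A *m x) 0 0.

(* standard basis vector e^(i+1), index i in {0..n-1} (as a nat) *)
Definition evec (i : nat) : 'cV[R]_n := \col_(r < n) (r == i :> nat)%:R.

(* Given a realisation d : nat -> nat of the indices of d_0, d_1, ...
   (d_j = e^(d j)), hist ... j is the list [x_0; ...; x_j]. *)
Fixpoint hist (A : 'M[R]_n) (xs x0 : 'cV[R]_n) (beta : R) (k : nat -> nat)
    (d : nat -> nat) (j : nat) : seq 'cV[R]_n :=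
  match j with
  | 0 => [:: x0]
  | j'.+1 =>
      let h := hist A xs x0 beta k d j' in
      let xk := nth 0 h (k j') in
      let gamma := ipA A (xs - xk) (evec (d j')) in
      rcons h (last x0 h + (beta * gamma) *: evec (d j'))
  end.

Definition iterate (A : 'M[R]_n) (xs x0 : 'cV[R]_n) (beta : R) (k : nat -> nat)
    (j : nat) (d : nat -> nat) : 'cV[R]_n :=
  nth 0 (hist A xs x0 beta k d j) j.

(* Expectation of a functional f of the first N draws d_0..d_{N-1}, which are
   i.i.d. uniform on {0..n-1}: the average over all N-tuples. *)
Definition Exp (N : nat) (f : (nat -> nat) -> R) : R :=
  (n%:R ^+ N)^-1 *
  \sum_(t : N.-tuple 'I_n) f (fun j => nth 0%N [seq nat_of_ord i | i <- t] j).

Definition rhoA (A : 'M[R]_n) : R :=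
  \big[Num.max/0]_(l < n) (n%:R^-1 * \sum_(r < n) `|A l r|).
End Defs.

(* Write e_j = x_j - x* for the error and s_j = (e_{k(j)}, d_j)_A for the stale
   residual used at step j, so that e_{j+1} = e_j - s_j d_j.  Telescoping from
   k(j) to j and using (d_j, d_j)_A = A_ii = 1 yields the exact identity
     |e_{j+1}|_A^2 = |e_j|_A^2 - s_j^2 + 2 s_j sum_{k(j)<=t<j} s_t (d_t, d_j)_A.
   Bounding 2 s_j s_t c <= (s_j^2 + s_t^2)|c| and averaging, in each cross term,
   over the single independent uniform direction that s_j^2 resp. s_t^2 does
   not depend on (d_t resp. d_j), replaces |c| = |A_{d_j d_t}| by a row or
   column mean of |A|, hence by rho; this gives the one-step bound.  Summing
   the one-step bound over j < m and noting that each t lies in the window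
   [k(i), i) of at most tau indices i gives the cumulative bound. *)
From HB Require Import structures.
From mathcomp Require Import all_boot all_order all_algebra.
From mathcomp Require Import ring lra zify.
From Stdlib Require Import FunctionalExtensionality.
Import Order.TTheory GRing.Theory Num.Theory.
Local Open Scope ring_scope.
Set Implicit Arguments. Unset Strict Implicit.

Section UniformAverages.
Variable R : realFieldType.
Variable n : nat.
Hypothesis n_gt0 : (0 < n)%N.

Definition tseq (t : seq 'I_n) : nat -> nat :=
  fun j => nth 0%N [seq nat_of_ord i | i <- t] j.

Definition dcons (i : nat) (d : nat -> nat) : nat -> nat :=
  fun j => if j is j'.+1 then d j' else i.

Definition upd (d : nat -> nat) (p i : nat) : nat -> nat :=
  fun m => if m == p then i else d m.

Definition tsum N (F : (nat -> nat) -> R) : R :=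
  \sum_(t : N.-tuple 'I_n) F (tseq t).

Lemma tseq_lt (t : seq 'I_n) j : (tseq t j < n)%N.
Proof.
rewrite /tseq; case: (ltnP j (size t)) => h.
  by rewrite (nth_map (Ordinal n_gt0)).
by rewrite nth_default ?size_map.
Qed.

Lemma tsum0 F : tsum 0 F = F (fun _ => 0%N).
Proof.
rewrite /tsum (big_pred1 [tuple]) => [|t /=]; last exact/esym/eqP/tuple0.
by congr F; apply: functional_extensionality => -[|j].
Qed.

Lemma tsum_cons N F : tsum N.+1 F = \sum_(i < n) tsum N (fun d => F (dcons i d)).
Proof.
rewrite /tsum pair_big /=.
rewrite (reindex (fun p : 'I_n * N.-tuple 'I_n => [tuple of p.1 :: p.2])) /=.
  apply: eq_bigr => -[i t] _ /=; congr F.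
  by apply: functional_extensionality => -[|j].
exists (fun t : N.+1.-tuple 'I_n => (thead t, [tuple of behead t])).
  by move=> [i t] _ /=; rewrite theadE; congr pair; apply: val_inj.
by move=> t _; rewrite [RHS]tuple_eta.
Qed.

Lemma tsum_ext N F G : (forall d, F d = G d) -> tsum N F = tsum N G.
Proof. by move=> h; apply: eq_bigr. Qed.

Lemma tsum_resample N F p : (p < N)%N ->
  tsum N F = tsum N (fun d => n%:R^-1 * \sum_(i < n) F (upd d p i)).
Proof.
elim: N F p => [//|N IH] F [|p] hp; rewrite !tsum_cons.
  have upd_dcons (i i' : 'I_n) d : upd (dcons i d) 0 i' = dcons i' d.
    by apply: functional_extensionality => -[|j].
  set c := n%:R^-1 * \sum_(i < n) tsum N (fun d => F (dcons i d)).
  rewrite [RHS](eq_bigr (fun _ => c)) => [|i _]; last first.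
    rewrite /c /tsum exchange_big mulr_sumr; apply: eq_bigr => t _ /=.
    by congr (_ * _); apply: eq_bigr => i' _; rewrite upd_dcons.
  rewrite sumr_const card_ord -mulr_natl /c mulrA mulfV ?mul1r //.
  by rewrite pnatr_eq0 -lt0n.
apply: eq_bigr => i _; rewrite (IH _ p hp); apply: tsum_ext => d.
congr (_ * _); apply: eq_bigr => i' _; congr F.
by apply: functional_extensionality => -[|j].
Qed.

Lemma tsum_marg N F :
  (forall d d', (forall m, (m < N)%N -> d m = d' m) -> F d = F d') ->
  tsum N.+1 F = n%:R * tsum N F.
Proof.
elim: N F => [|N IH] F hF.
  rewrite tsum_cons tsum0; under eq_bigr do rewrite tsum0.
  rewrite (eq_bigr (fun _ => F (fun _ => 0%N))) => [|i _]; last exact: hF.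
  by rewrite sumr_const card_ord mulr_natl.
rewrite tsum_cons (tsum_cons N) mulr_sumr; apply: eq_bigr => i _; apply: IH.
by move=> d d' h; apply: hF => -[|m] //= hm; apply: h.
Qed.

Lemma ExpE N f : Exp n N f = (n%:R ^+ N)^-1 * tsum N f.
Proof. by []. Qed.

Lemma Exp_le N (f g : (nat -> nat) -> R) :
  (forall d, (forall m, (d m < n)%N) -> f d <= g d) -> Exp n N f <= Exp n N g.
Proof.
move=> h; rewrite !ExpE; apply: ler_wpM2l.
  by rewrite invr_ge0 exprn_ge0 ?ler0n.
by apply: ler_sum => t _; apply: h => m; apply: tseq_lt.
Qed.

Lemma Exp_add N (f g : (nat -> nat) -> R) :
  Exp n N (fun d => f d + g d) = Exp n N f + Exp n N g.
Proof. by rewrite !ExpE /tsum big_split mulrDr. Qed.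

Lemma Exp_scale N c (f : (nat -> nat) -> R) :
  Exp n N (fun d => c * f d) = c * Exp n N f.
Proof. by rewrite !ExpE /tsum -mulr_sumr mulrCA. Qed.

Lemma Exp_opp N (f : (nat -> nat) -> R) :
  Exp n N (fun d => - f d) = - Exp n N f.
Proof.
rewrite -mulN1r -Exp_scale !ExpE; congr (_ * _).
by apply: tsum_ext => d; rewrite mulN1r.
Qed.

Lemma Exp_sum N (I : Type) (r : seq I) (F : I -> (nat -> nat) -> R) :
  Exp n N (fun d => \sum_(i <- r) F i d) = \sum_(i <- r) Exp n N (F i).
Proof. by rewrite ExpE /tsum exchange_big mulr_sumr. Qed.

Lemma Exp_ge0 N (f : (nat -> nat) -> R) :
  (forall d, 0 <= f d) -> 0 <= Exp n N f.
Proof.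
move=> h; have := Exp_le N (f := fun _ => 0) (g := f) (fun d _ => h d).
by rewrite ExpE /tsum big1 ?mulr0.
Qed.

Lemma Exp_marg N m (f : (nat -> nat) -> R) :
  (forall d d', (forall i, (i < N)%N -> d i = d' i) -> f d = f d') ->
  Exp n (m + N) f = Exp n N f.
Proof.
move=> hf; elim: m => [//|m IH].
rewrite addSn -IH !ExpE tsum_marg => [|d d' hd]; last first.
  by apply: hf => i hi; apply: hd; apply: leq_trans hi (leq_addl _ _).
rewrite exprS invfM mulrAC -!mulrA mulrA mulVf ?mul1r ?pnatr_eq0 -?lt0n //.
by rewrite mulrC.
Qed.

Lemma Exp_resample N p (f : (nat -> nat) -> R) : (p < N)%N ->
  Exp n N f = Exp n N (fun d => n%:R^-1 * \sum_(i < n) f (upd d p i)).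
Proof. by move=> hp; rewrite !ExpE (tsum_resample f hp). Qed.

End UniformAverages.

Section Causality.
Variable R : realFieldType.
Variable n : nat.
Variables (A : 'M[R]_n) (xs x0 : 'cV[R]_n) (beta : R) (k : nat -> nat).
Hypothesis k_le : forall j, (k j <= j)%N.

Local Notation hist := (hist A xs x0 beta k).
Local Notation x := (iterate A xs x0 beta k).

Lemma size_hist d j : size (hist d j) = j.+1.
Proof. by elim: j => //= j IH; rewrite size_rcons IH. Qed.

Lemma nth_hist d j i : (i <= j)%N -> nth 0 (hist d j) i = x i d.
Proof.
elim: j => [|j IH]; first by rewrite leqn0 => /eqP ->.
rewrite leq_eqVlt => /orP [/eqP -> //|hi].
by rewrite /= nth_rcons size_hist hi IH.
Qed.

Lemma iterateS d j : x j.+1 d =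
  x j d + (beta * ipA A (xs - x (k j) d) (evec R n (d j))) *: evec R n (d j).
Proof.
have last_hist : last x0 (hist d j) = x j d.
  by case: j => [|j] //=; rewrite last_rcons /iterate /= nth_rcons size_hist ltnn eqxx.
by rewrite {1}/iterate /= nth_rcons size_hist ltnn eqxx last_hist nth_hist.
Qed.

Lemma iterate_causal j d d' :
  (forall m, (m < j)%N -> d m = d' m) -> x j d = x j d'.
Proof.
elim/ltn_ind: j => -[|j] IH hd //.
rewrite !iterateS hd // (IH j) // ?(IH (k j)) // => [||m hm]; last exact: hd (ltnW hm).
  exact: leq_ltn_trans (k_le j) _.
by move=> m hm; apply: hd; apply: leq_trans hm (leq_trans (k_le j) _).
Qed.

End Causality.

Section InnerProduct.
Variable R : realFieldType.
Variable n : nat.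
Variable A : 'M[R]_n.

Lemma ipaDl x y z : ipA A (x + y) z = ipA A x z + ipA A y z.
Proof. by rewrite /ipA mulmxDr mxE. Qed.

Lemma ipaZl c x z : ipA A (c *: x) z = c * ipA A x z.
Proof. by rewrite /ipA -scalemxAr mxE. Qed.

Lemma ipaDr x y z : ipA A z (x + y) = ipA A z x + ipA A z y.
Proof. by rewrite /ipA linearD /= !mulmxDl mxE. Qed.

Lemma ipaZr c x z : ipA A z (c *: x) = c * ipA A z x.
Proof. by rewrite /ipA linearZ /= -!scalemxAl mxE. Qed.

Lemma ipaBl x y z : ipA A (x - y) z = ipA A x z - ipA A y z.
Proof. by rewrite ipaDl -scaleN1r ipaZl mulN1r. Qed.

Lemma ipaBr x y z : ipA A z (x - y) = ipA A z x - ipA A z y.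
Proof. by rewrite ipaDr -scaleN1r ipaZr mulN1r. Qed.

Lemma ipa_suml (I : Type) (r : seq I) (F : I -> 'cV[R]_n) z :
  ipA A (\sum_(i <- r) F i) z = \sum_(i <- r) ipA A (F i) z.
Proof.
apply: (big_morph (fun v => ipA A v z) (fun u v => ipaDl u v z)).
by rewrite /ipA mulmx0 mxE.
Qed.

Lemma ipa_sym x y : A^T = A -> ipA A x y = ipA A y x.
Proof.
move=> A_sym; rewrite /ipA.
have -> : y^T *m A *m x = (x^T *m A *m y)^T by rewrite !trmx_mul A_sym trmxK mulmxA.
by rewrite mxE.
Qed.

Lemma ipa_evec (i l : 'I_n) : ipA A (evec R n l) (evec R n i) = A i l.
Proof.
have evec_delta (r : 'I_n) : evec R n r = delta_mx r 0.
  by apply/matrixP => r' c; rewrite !mxE ord1 eqxx andbT.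
by rewrite /ipA !evec_delta trmx_delta -rowE -colE !mxE.
Qed.

End InnerProduct.

Lemma cross_le (R : realDomainType) (a b c : R) :
  2 * a * b * c <= (a ^+ 2 + b ^+ 2) * `|c|.
Proof.
have [c_ge0|c_lt0] := lerP 0 c.
  rewrite ger0_norm //; have := mulr_ge0 (sqr_ge0 (a - b)) c_ge0; nra.
have negc_ge0 : 0 <= - c by rewrite oppr_ge0 ltW.
rewrite ltr0_norm //; have := mulr_ge0 (sqr_ge0 (a + b)) negc_ge0.
nra.
Qed.

Section RowMeans.
Variable R : realFieldType.
Variable n : nat.
Variable A : 'M[R]_n.

Lemma rhoA_ge0 : 0 <= rhoA A.
Proof.
rewrite /rhoA; elim/big_ind: _ => // [a b a_ge0 b_ge0|l _].
  by rewrite le_max a_ge0.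
by rewrite mulr_ge0 ?invr_ge0 ?ler0n ?sumr_ge0.
Qed.

Lemma row_mean_le (l : 'I_n) : n%:R^-1 * \sum_(r < n) `|A l r| <= rhoA A.
Proof. exact: (le_bigmax 0 (fun l : 'I_n => n%:R^-1 * \sum_(r < n) `|A l r|) l). Qed.

Lemma col_mean_le (l : 'I_n) : A^T = A ->
  n%:R^-1 * \sum_(r < n) `|A r l| <= rhoA A.
Proof.
move=> A_sym; rewrite (eq_bigr (fun r => `|A l r|)) ?row_mean_le // => r _.
by rewrite -{1}A_sym mxE.
Qed.

End RowMeans.

Section EnergyEstimates.
Variable R : realFieldType.
Variable n : nat.
Variables (A : 'M[R]_n) (xs x0 : 'cV[R]_n) (k : nat -> nat).
Hypothesis n_gt0 : (0 < n)%N.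
Hypothesis A_sym : A^T = A.
Hypothesis A_diag : forall i : 'I_n, A i i = 1.
Hypothesis k_le : forall j, (k j <= j)%N.

Local Notation x := (iterate A xs x0 1 k).

Definition err j d := x j d - xs.
Definition dir j (d : nat -> nat) := evec R n (d j).
Definition sres j d := ipA A (err (k j) d) (dir j d).

Definition energy m := Exp n m (fun d => ipA A (err m d) (err m d)).
Definition sres_sq t := Exp n t.+1 (fun d => sres t d ^+ 2).

Lemma err_rec j d : err j.+1 d = err j d - sres j d *: dir j d.
Proof.
rewrite /err /sres /dir iterateS // mul1r -[xs - _]opprB -scaleN1r ipaZl.
by rewrite mulN1r scaleNr addrAC.
Qed.

Lemma err_tele a b d : (a <= b)%N ->
  err b d = err a d - \sum_(a <= t < b) sres t d *: dir t d.
Proof.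
elim: b => [|b IH]; first by rewrite leqn0 => /eqP ->; rewrite big_geq // subr0.
rewrite leq_eqVlt => /orP [/eqP ->|ab]; first by rewrite big_geq // subr0.
by rewrite err_rec IH // big_nat_recr //= opprD addrA.
Qed.

Lemma sres_causal t d d' :
  (forall m, (m < k t)%N -> d m = d' m) -> d t = d' t -> sres t d = sres t d'.
Proof.
by move=> h ht; rewrite /sres /dir /err ht (iterate_causal _ _ _ _ k_le h).
Qed.

Lemma dir_norm j d : (d j < n)%N -> ipA A (dir j d) (dir j d) = 1.
Proof.
by move=> hd; rewrite /dir -[d j]/(nat_of_ord (Ordinal hd)) ipa_evec A_diag.
Qed.

Lemma energy_identity j d : (d j < n)%N ->
  ipA A (err j.+1 d) (err j.+1 d) = ipA A (err j d) (err j d) - sres j d ^+ 2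
   + 2 * sres j d * \sum_(k j <= t < j) sres t d * ipA A (dir t d) (dir j d).
Proof.
move=> hd.
have stale_gap : ipA A (err j d) (dir j d) =
    sres j d - \sum_(k j <= t < j) sres t d * ipA A (dir t d) (dir j d).
  rewrite (err_tele d (k_le j)) ipaBl ipa_suml; congr (_ - _).
  by apply: eq_bigr => t _; rewrite ipaZl.
rewrite err_rec; move: stale_gap (dir_norm hd).
set e := err j d; set u := dir j d => stale_gap u_norm; clearbody e u.
rewrite !ipaBl !ipaBr !ipaZl !ipaZr u_norm (ipa_sym u) // stale_gap.
ring.
Qed.

Lemma energy_pointwise j d : (d j < n)%N ->
  ipA A (err j.+1 d) (err j.+1 d) <= ipA A (err j d) (err j d) - sres j d ^+ 2
   + \sum_(k j <= t < j) (sres j d ^+ 2 * `|ipA A (dir t d) (dir j d)|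
                          + sres t d ^+ 2 * `|ipA A (dir t d) (dir j d)|).
Proof.
move=> hd; rewrite energy_identity // lerD2l mulr_sumr; apply: ler_sum => t _.
by rewrite mulrA -mulrDl cross_le.
Qed.

Lemma sres_sq_ge0 t : 0 <= sres_sq t.
Proof. by apply: (Exp_ge0 n_gt0) => d; apply: sqr_ge0. Qed.

(* Averaging over the older direction d_t, on which s_j does not depend,
   turns |A_(d_j d_t)| into a row mean of |A|. *)
Lemma cross_mean_new j t : (k j <= t < j)%N ->
  Exp n j.+1 (fun d => sres j d ^+ 2 * `|ipA A (dir t d) (dir j d)|)
    <= rhoA A * sres_sq j.
Proof.
case/andP => kj_le_t t_lt_j; rewrite (Exp_resample n_gt0 _ (ltnW t_lt_j : (t < j.+1)%N)).
rewrite /sres_sq -Exp_scale; apply: Exp_le => // d hd.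
have jt : (j == t) = false by apply/negbTE; rewrite neq_ltn t_lt_j orbT.
have sres_upd (i : 'I_n) : sres j (upd d t i) = sres j d.
  apply: sres_causal => [m m_lt|]; last by rewrite /upd jt.
  by rewrite /upd ifN // neq_ltn (leq_trans m_lt kj_le_t).
under eq_bigr => i _ do
  rewrite sres_upd /dir /upd eqxx jt -[d j]/(nat_of_ord (Ordinal (hd j))) ipa_evec.
rewrite -mulr_sumr mulrCA [rhoA A * _]mulrC ler_wpM2l ?sqr_ge0 //.
exact: row_mean_le.
Qed.

(* Averaging over the newer direction d_j, on which s_t does not depend,
   turns |A_(d_j d_t)| into a column mean of |A|. *)
Lemma cross_mean_old j t : (k j <= t < j)%N ->
  Exp n j.+1 (fun d => sres t d ^+ 2 * `|ipA A (dir t d) (dir j d)|)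
    <= rhoA A * sres_sq t.
Proof.
case/andP => _ t_lt_j; rewrite (Exp_resample n_gt0 _ (ltnSn j)).
have -> : sres_sq t = Exp n j.+1 (fun d => sres t d ^+ 2).
  rewrite /sres_sq -(subnK (leqW t_lt_j)) Exp_marg // => d d' h.
  rewrite (@sres_causal t d d') ?h // => m m_lt.
  by apply: h; apply: leq_trans m_lt (leq_trans (k_le t) _).
rewrite -Exp_scale; apply: Exp_le => // d hd.
have tj : (t == j) = false by apply/negbTE; rewrite neq_ltn t_lt_j.
have sres_upd (i : 'I_n) : sres t (upd d j i) = sres t d.
  apply: sres_causal => [m m_lt|]; last by rewrite /upd tj.
  by rewrite /upd ifN // neq_ltn (leq_trans m_lt (leq_trans (k_le t) (ltnW t_lt_j))).
under eq_bigr => i _ do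
  rewrite sres_upd /dir /upd eqxx tj -[d t]/(nat_of_ord (Ordinal (hd t))) ipa_evec.
rewrite -mulr_sumr mulrCA [rhoA A * _]mulrC ler_wpM2l ?sqr_ge0 //.
exact: col_mean_le.
Qed.

Lemma one_step j tau : (j <= k j + tau)%N ->
  energy j.+1 <= energy j - (1 - rhoA A * tau%:R) * sres_sq j
                 + rhoA A * \sum_(k j <= t < j) sres_sq t.
Proof.
move=> j_le; have rho_ge0 := rhoA_ge0 A; have G_ge0 := sres_sq_ge0 j.
apply: le_trans (Exp_le n_gt0 j.+1 (fun d hd => energy_pointwise (hd j))) _.
rewrite !Exp_add Exp_opp Exp_sum (Exp_marg n_gt0 1) => [|d d' hd]; last first.
  by rewrite /err (iterate_causal _ _ _ _ k_le hd).
have cross_le_rho : \sum_(k j <= t < j)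
    (Exp n j.+1 (fun d => sres j d ^+ 2 * `|ipA A (dir t d) (dir j d)|)
     + Exp n j.+1 (fun d => sres t d ^+ 2 * `|ipA A (dir t d) (dir j d)|))
  <= \sum_(k j <= t < j) (rhoA A * sres_sq j + rhoA A * sres_sq t).
  apply: ler_sum_nat => t ht.
  by apply: lerD; [apply: cross_mean_new | apply: cross_mean_old].
under eq_bigr do rewrite Exp_add.
apply: le_trans (lerD (lexx _) cross_le_rho) _.
rewrite big_split /= sumr_const_nat -mulr_sumr -/(sres_sq j) -/(energy j).
have window_le : ((j - k j)%:R : R) <= tau%:R by rewrite ler_nat; lia.
have : rhoA A * sres_sq j *+ (j - k j) <= rhoA A * tau%:R * sres_sq j.
  by rewrite -mulr_natr mulrAC ler_wpM2r // ler_wpM2l.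
lra.
Qed.

Lemma sum_window (F : nat -> R) a b m : (a <= b)%N -> (b <= m)%N ->
  \sum_(a <= t < b) F t = \sum_(t < m) ((a <= t < b)%N%:R * F t).
Proof.
move=> ab bm; rewrite -(big_mkord xpredT (fun t => (a <= t < b)%N%:R * F t)).
rewrite (@big_cat_nat _ _ _ a 0 m) ?(leq_trans ab bm) // (@big_cat_nat _ _ _ b a m) //=.
have below : \sum_(0 <= t < a) ((a <= t < b)%N%:R * F t) = 0.
  rewrite big_nat_cond big1 // => t /andP [/andP [_ ta] _].
  by rewrite leqNgt ta mul0r.
have above : \sum_(b <= t < m) ((a <= t < b)%N%:R * F t) = 0.
  rewrite big_nat_cond big1 // => t /andP [/andP [bt _] _].
  by rewrite ltnNge bt andbF mul0r.
rewrite below above add0r addr0.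
by apply: eq_big_nat => t ->; rewrite mul1r.
Qed.

Lemma count_interval t tau m :
  (\sum_(i < m) ((t < i) && (i <= t + tau)) = minn m (t + tau).+1 - minn m t.+1)%N.
Proof.
elim: m => [|m IH]; first by rewrite big_ord0.
by rewrite big_ord_recr /= IH; case: (ltnP t m); case: (leqP m (t + tau)); lia.
Qed.

Lemma window_count t tau m : (forall j, (j <= k j + tau)%N) ->
  \sum_(i < m) ((k i <= t < i)%N%:R : R) <= tau%:R.
Proof.
move=> k_ge; rewrite -natr_sum ler_nat.
apply: (@leq_trans (\sum_(i < m) ((t < i) && (i <= t + tau)))); last first.
  by rewrite count_interval; lia.
apply: leq_sum => i _; case/boolP: (k i <= t < i)%N => //= /andP [kit ti].
by rewrite ti lt0b; have := k_ge i; lia.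
Qed.

Lemma cumulative m tau : (forall j, (j <= k j + tau)%N) ->
  energy m <= energy 0 - (1 - 2 * rhoA A * tau%:R) * \sum_(i < m) sres_sq i.
Proof.
move=> k_ge; have rho_ge0 := rhoA_ge0 A.
have summed : energy m <= energy 0 - (1 - rhoA A * tau%:R) * \sum_(i < m) sres_sq i
    + rhoA A * \sum_(i < m) \sum_(k i <= t < i) sres_sq t.
  elim: m => [|m IH]; first by rewrite !big_ord0; lra.
  by apply: le_trans (one_step (k_ge m)) _; rewrite !big_ord_recr /=; lra.
have windows : \sum_(i < m) \sum_(k i <= t < i) sres_sq t
    <= tau%:R * \sum_(i < m) sres_sq i.
  under eq_bigr => i _ do rewrite (sum_window _ (k_le i) (ltnW (ltn_ord i))).
  rewrite exchange_big mulr_sumr; apply: ler_sum => t _.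
  by rewrite -mulr_suml ler_wpM2r ?sres_sq_ge0 ?window_count.
have := ler_wpM2l rho_ge0 windows; lra.
Qed.

End EnergyEstimates.

Theorem mainTheorem7 (R : realFieldType) (n : nat) (A : 'M[R]_n)
  (b x0 : 'cV[R]_n) (tau : nat) (k : nat -> nat) :
  (2 <= n)%N ->
  A^T = A ->
  (forall v : 'cV[R]_n, v != 0 -> 0 < (v^T *m A *m v) 0 0) ->
  (forall i : 'I_n, A i i = 1) ->
  (forall j : nat, (j <= k j + tau)%N /\ (k j <= j)%N) ->
  let xs := invmx A *m b in
  let x := iterate A xs x0 1 k in
  let E := fun m : nat => Exp n m (fun d => ipA A (x m d - xs) (x m d - xs)) in
  let G := fun t : nat =>
    Exp n t.+1 (fun d => (ipA A (x (k t) d - xs) (@evec R n (d t))) ^+ 2) in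
  let rho := rhoA A in
  (forall j : nat,
     E j.+1 <= E j - (1 - rho * tau%:R) * G j + rho * \sum_(k j <= t < j) G t)
  /\
  (forall m : nat, (1 <= m)%N ->
     E m <= E 0 - (1 - 2 * rho * tau%:R) * \sum_(i < m) G i).
Proof.
move=> n_ge2 A_sym _ A_diag k_window xs x E G rho.
have n_gt0 : (0 < n)%N by apply: leq_trans n_ge2.
have k_le j : (k j <= j)%N by case: (k_window j).
have k_ge j : (j <= k j + tau)%N by case: (k_window j).
split=> [j | m _].
- exact: (one_step xs x0 n_gt0 A_sym A_diag k_le (k_ge j)).
- exact: (cumulative xs x0 n_gt0 A_sym A_diag k_le m k_ge).
Qed.
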